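(* Let $A,B$ be commutative rings, $f:A\to B$ a ring homomorphism and $J$ an ideal of $B$ with $J\subseteq\operatorname{Nil}(B)$. Let $\mathfrak a$ be an ideal of $A$ and $\mathfrak p$ a prime ideal of $A$. Then (1) $\mathfrak p$ is a minimal prime over $\mathfrak a$ if and only if $\mathfrak p^{\prime_f}$ is a minimal prime over $\mathfrak a^e$; (2) $\operatorname{ht}\mathfrak a=\operatorname{ht}\mathfrak a^e$; (3) the only minimal prime ideal of $A\bowtie^fJ$ over $\mathfrak p^e$ is $\mathfrak p^{\prime_f}$; in particular $\operatorname{ht}\mathfrak p^e=\operatorname{ht}\mathfrak p^{\prime_f}$.
   Context: $\operatorname{Nil}(B)$ is the nilradical of $B$. $A\bowtie^fJ=\{(a,f(a)+j): a\in A,\ j\in J\}\subseteq A\times B$; $\iota_A(x)=(x,f(x))$ and $\mathfrak a^e=\iota_A(\mathfrak a)(A\bowtie^fJ)$. For a prime $\mathfrak p$ of $A$, $\mathfrak p^{\prime_f}=\{(p,f(p)+j): p\in\mathfrak p,\ j\in J\}$. Height of an ideal $I$ of a ring $R$: $\operatorname{ht}I=\inf\{\dim R_\mathfrak P:\mathfrak P\supseteq I$ prime$\}$. *)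

From HB Require Import structures.
From mathcomp Require Import all_boot all_order all_algebra.
Set Implicit Arguments. Unset Strict Implicit. Unset Printing Implicit Defensive.
Import GRing.Theory.
Local Open Scope ring_scope.

Definition subs (T : Type) := T -> Prop.
Definition incl (T : Type) (X Y : subs T) := forall x, X x -> Y x.
Definition sincl (T : Type) (X Y : subs T) := incl X Y /\ exists x, Y x /\ ~ X x.
Definition seteq (T : Type) (X Y : subs T) := forall x, X x <-> Y x.
Definition fullset (T : Type) : subs T := fun _ => True.
Arguments fullset T _ : clear implicits.

Section RingNotions.
Variable R : comPzRingType.
(* S : subs R is the carrier of a subring of R; ideals/primes are those of
   the ring S.  For a ring A itself, take S := fullset A. *)
Variable S : subs R.

Definition is_ideal (I : subs R) : Prop :=
  incl I S /\ I 0 /\ (forall x y, I x -> I y -> I (x + y)) /\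
  (forall r x, S r -> I x -> I (r * x)).

Definition is_prime (P : subs R) : Prop :=
  is_ideal P /\ ~ P 1 /\
  (forall x y, S x -> S y -> P (x * y) -> P x \/ P y).

Definition minimal_prime_over (I P : subs R) : Prop :=
  is_prime P /\ incl I P /\
  (forall Q, is_prime Q -> incl I Q -> incl Q P -> incl P Q).

Definition ideal_gen (X : subs R) : subs R :=
  fun z => forall I, is_ideal I -> incl X I -> I z.

Definition prime_ht_ge (P : subs R) (n : nat) : Prop :=
  exists c : nat -> subs R,
    (forall i, (i <= n)%N -> is_prime (c i)) /\
    (forall i, (i < n)%N -> sincl (c i) (c i.+1)) /\
    incl (c n) P.

(* ht I >= n  (ht I = inf of dim S_P over primes P containing I, in N ∪ {oo}) *)
Definition ideal_ht_ge (I : subs R) (n : nat) : Prop :=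
  forall P, is_prime P -> incl I P -> prime_ht_ge P n.

End RingNotions.

Definition same_height (R1 R2 : comPzRingType) (S1 : subs R1) (S2 : subs R2)
  (I1 : subs R1) (I2 : subs R2) : Prop :=
  forall n, ideal_ht_ge S1 I1 n <-> ideal_ht_ge S2 I2 n.

Definition nilradical (B : comPzRingType) : subs B :=
  fun x => exists n, x ^+ n = 0.
Arguments nilradical B _ : clear implicits.

Section Amalgamation.
Variables (A B : comPzRingType) (f : {rmorphism A -> B}) (J : subs B).

Definition amalg : subs (A * B)%type :=
  fun z => exists a j, J j /\ z = (a, f a + j).

Definition iotaA (x : A) : (A * B)%type := (x, f x).

Definition ext_ideal (a : subs A) : subs (A * B)%type :=
  ideal_gen amalg (fun z => exists x, a x /\ z = iotaA x).

Definition prime_f (p : subs A) : subs (A * B)%type :=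
  fun z => exists p0 j, p p0 /\ J j /\ z = (p0, f p0 + j).
End Amalgamation.

(** The primes of [A ⋈^f J] are exactly the ideals [q'_f] for [q] prime in
    [A]: a prime [P] of [A ⋈^f J] contains every [(0, j)], because [J] consists
    of nilpotents, hence [P = (ι_A^-1 P)'_f].  As [q ↦ q'_f] also preserves and
    reflects (strict) inclusion, and [a^e ⊆ q'_f] exactly when [a ⊆ q], minimal
    primes and chains of primes correspond on both sides.  Over [p^e] every
    prime contains [p'_f], which is itself prime, whence (3). *)

From mathcomp Require Import all_boot all_order all_algebra.
From Stdlib Require Import FunctionalExtensionality PropExtensionality.
Set Implicit Arguments. Unset Strict Implicit. Unset Printing Implicit Defensive.
Import GRing.Theory.
Local Open Scope ring_scope.

Section IdealTheory.
Variables (R : comPzRingType) (S : subs R).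

Section Ideal.
Variables (I : subs R) (hI : is_ideal S I).

Lemma ideal_sub x : I x -> S x. Proof. by case: hI => sub _; apply: sub. Qed.
Lemma ideal0 : I 0. Proof. by case: hI => _ [I0 _]. Qed.
Lemma idealD x y : I x -> I y -> I (x + y).
Proof. by case: hI => _ [_ [D _]]; apply: D. Qed.
Lemma idealMl r x : S r -> I x -> I (r * x).
Proof. by case: hI => _ [_ [_ M]]; apply: M. Qed.

End Ideal.

Section Prime.
Variables (P : subs R) (hP : is_prime S P).

Lemma prime_ideal : is_ideal S P. Proof. by case: hP. Qed.
Lemma prime_neq1 : ~ P 1. Proof. by case: hP => _ []. Qed.
Lemma primeM x y : S x -> S y -> P (x * y) -> P x \/ P y.
Proof. by case: hP => _ [_ M]; apply: M. Qed.

Lemma prime_radical x n : (forall k, S (x ^+ k.+1)) -> P (x ^+ n.+1) -> P x.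
Proof.
move=> Sx; elim: n => [|n IHn]; first by rewrite expr1.
by rewrite exprS => /primeM[]; [exact: (Sx 0%N) | exact: Sx | | exact: IHn].
Qed.

Lemma minimal_prime_over_self : minimal_prime_over S P P.
Proof. by split=> //; split=> // [x Px | Q _ PQ _]. Qed.

End Prime.

Lemma minimal_prime_over_prime P Q :
  is_prime S P -> minimal_prime_over S P Q -> seteq Q P.
Proof.
move=> hP [hQ [PQ minQ]] x; split; last exact: PQ.
exact: minQ P hP (fun y Py => Py) PQ x.
Qed.

Section SamePrimesAbove.
Variables (I1 I2 : subs R).
Hypothesis primes_above : forall Q, is_prime S Q -> incl I1 Q <-> incl I2 Q.

Lemma minimal_prime_over_same_primes P :
  minimal_prime_over S I1 P <-> minimal_prime_over S I2 P.
Proof.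
split=> -[hP [IP minP]]; split=> //; split=> [|Q hQ /(primes_above hQ)];
  by [apply/(primes_above hP) | apply: minP].
Qed.

Lemma same_height_same_primes : same_height S S I1 I2.
Proof. by move=> n; split=> ht Q hQ IQ; apply: (ht _ hQ); apply/(primes_above hQ). Qed.

End SamePrimesAbove.
End IdealTheory.

Lemma pair0_expr (R1 R2 : pzSemiRingType) (y : R2) n :
  ((0 : R1), y) ^+ n.+1 = (0, y ^+ n.+1).
Proof.
elim: n => [|n IHn]; first by rewrite !expr1.
by rewrite exprS IHn [in RHS]exprS; congr pair; rewrite /= mul0r.
Qed.

Section Amalgamation.
Variables (A B : comPzRingType) (f : {rmorphism A -> B}) (J : subs B).
Hypothesis hJ : is_ideal (fullset B) J.

Local Notation amalg := (amalg f J).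
Local Notation prime_f := (prime_f f J).
Local Notation iotaA := (iotaA f).

Lemma amalg_iotaA x : amalg (iotaA x).
Proof. by exists x, 0; rewrite addr0; split=> //; apply: ideal0 hJ. Qed.

Lemma amalg_0J j : J j -> amalg (0, j).
Proof. by exists 0, j; rewrite rmorph0 add0r. Qed.

Lemma prime_f_iotaA q x : prime_f q (iotaA x) <-> q x.
Proof.
split; first by case=> p0 [j [qp0 [_ [-> _]]]].
by exists x, 0; rewrite addr0; split=> //; split=> //; apply: ideal0 hJ.
Qed.

Lemma prime_f_incl q1 q2 : incl (prime_f q1) (prime_f q2) <-> incl q1 q2.
Proof.
split=> sub; first by move=> x /(prime_f_iotaA q1) /sub /prime_f_iotaA.
by move=> _ [p0 [j [qp0 [Jj ->]]]]; exists p0, j; split; first exact: sub.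
Qed.

Lemma prime_f_sincl q1 q2 : sincl (prime_f q1) (prime_f q2) <-> sincl q1 q2.
Proof.
rewrite /sincl prime_f_incl; split=> -[sub [z [q2z q1Nz]]]; split=> //.
  case: q2z q1Nz => p0 [j [q2p0 [Jj ->]]] q1Nz.
  by exists p0; split=> // q1p0; apply: q1Nz; exists p0, j.
by exists (iotaA z); rewrite !prime_f_iotaA.
Qed.

Lemma prime_f_ideal q : is_ideal (fullset A) q -> is_ideal amalg (prime_f q).
Proof.
move=> hq; split; [|split; [|split]].
- by move=> _ [p0 [j [_ [Jj ->]]]]; exists p0, j.
- exists 0, 0; rewrite rmorph0 addr0.
  by split; [apply: ideal0 hq | split; [apply: ideal0 hJ |]].
- move=> _ _ [x [j [qx [Jj ->]]]] [y [k [qy [Jk ->]]]].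
  exists (x + y), (j + k); split; first exact: (idealD hq).
  by split; [apply: (idealD hJ) | rewrite /= rmorphD addrACA].
- move=> _ _ [r [i [Ji ->]]] [x [j [qx [Jj ->]]]].
  exists (r * x), (f r * j + i * (f x + j)); split; first exact: (idealMl hq).
  split; first by apply: (idealD hJ); [|rewrite mulrC]; apply: (idealMl hJ).
  by rewrite rmorphM; congr pair; rewrite /= mulrDl mulrDr addrA.
Qed.

Lemma prime_f_prime q : is_prime (fullset A) q -> is_prime amalg (prime_f q).
Proof.
move=> hq; split; first exact/prime_f_ideal/(prime_ideal hq).
split; first by case=> p0 [j [qp0 [_ [e1 _]]]]; apply: (prime_neq1 hq); rewrite e1.
move=> _ _ [x [j [Jj ->]]] [y [k [Jk ->]]] [p0 [i [qp0 [_ [exy _]]]]].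
case: (primeM hq I I (_ : q (x * y))) => [|qx|qy]; first by rewrite exy.
- by left; exists x, j.
- by right; exists y, k.
Qed.

Lemma ext_ideal_incl_prime_f a q :
  is_ideal (fullset A) q -> incl (ext_ideal f J a) (prime_f q) <-> incl a q.
Proof.
move=> hq; split=> [sub x ax | sub z].
  by apply/prime_f_iotaA/sub => I _; apply; exists x.
apply; first exact: prime_f_ideal.
by move=> _ [x [ax ->]]; apply/prime_f_iotaA/sub.
Qed.

Hypothesis hJnil : incl J (nilradical B).

Definition contraction (P : subs (A * B)%type) : subs A := fun x => P (iotaA x).

Section PrimeOfAmalgamation.
Variables (P : subs (A * B)%type) (hP : is_prime amalg P).

Lemma prime_amalg_0J j : J j -> P (0, j).
Proof.
move=> Jj; have [n jn0] := hJnil Jj.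
have Jjk k : J (j ^+ k.+1) by rewrite exprSr; apply: (idealMl hJ).
apply: (prime_radical hP (n := n)) => [k|].
  by rewrite pair0_expr; apply: amalg_0J.
by rewrite pair0_expr exprSr jn0 mul0r; apply: (ideal0 (prime_ideal hP)).
Qed.

Lemma prime_amalgE : P = prime_f (contraction P).
Proof.
have hPi := prime_ideal hP.
apply: functional_extensionality => z; apply: propositional_extensionality.
split=> [Pz | [x [j [Px [Jj ->]]]]].
  have [x [j [Jj ez]]] := ideal_sub hPi Pz; exists x, j; split=> //.
  have -> : contraction P x = P (z + (0, - j)).
    by rewrite ez; congr P; congr pair; rewrite /= ?addr0 ?addrK.
  have Jnj : J (- j) by rewrite -mulN1r; apply: (idealMl hJ).
  exact: (idealD hPi) Pz (prime_amalg_0J Jnj).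
have -> : (x, f x + j) = iotaA x + (0, j) by congr pair; rewrite /= addr0.
exact: (idealD hPi) Px (prime_amalg_0J Jj).
Qed.

Lemma contraction_prime : is_prime (fullset A) (contraction P).
Proof.
have hPi := prime_ideal hP.
split; [split; [done | split; [|split]] | split].
- by rewrite /contraction /iotaA rmorph0; apply: (ideal0 hPi).
- move=> x y Px Py; rewrite /contraction /iotaA rmorphD.
  exact: (idealD hPi Px Py).
- move=> r x _ Px; rewrite /contraction /iotaA rmorphM.
  exact: (idealMl hPi (amalg_iotaA r) Px).
- by rewrite /contraction /iotaA rmorph1; apply: prime_neq1 hP.
- move=> x y _ _; rewrite /contraction /iotaA rmorphM.
  exact: (primeM hP (amalg_iotaA x) (amalg_iotaA y)).
Qed.

End PrimeOfAmalgamation.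

Lemma prime_amalg_prime_f P :
  is_prime amalg P -> exists2 q, is_prime (fullset A) q & P = prime_f q.
Proof.
by move=> hP; exists (contraction P); [apply: contraction_prime | apply: prime_amalgE].
Qed.

Lemma minimal_prime_over_prime_f a q : is_prime (fullset A) q ->
  minimal_prime_over (fullset A) a q <->
  minimal_prime_over amalg (ext_ideal f J a) (prime_f q).
Proof.
move=> hq; have hqi := prime_ideal hq; split=> -[_ [aq minq]].
  split; first exact: prime_f_prime.
  split; first exact/ext_ideal_incl_prime_f.
  move=> _ /prime_amalg_prime_f [q' hq' ->].
  move=> /(ext_ideal_incl_prime_f _ (prime_ideal hq')) aq' /prime_f_incl q'q.
  exact/prime_f_incl/(minq q' hq' aq' q'q).
split=> //; split; first exact/(ext_ideal_incl_prime_f _ hqi).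
move=> q' hq' aq' q'q; apply/(prime_f_incl q q'); apply: minq.
- exact: prime_f_prime.
- exact/(ext_ideal_incl_prime_f _ (prime_ideal hq')).
- exact/(prime_f_incl q' q).
Qed.

Lemma prime_ht_ge_prime_f q n : is_prime (fullset A) q ->
  prime_ht_ge (fullset A) q n <-> prime_ht_ge amalg (prime_f q) n.
Proof.
move=> hq; split=> -[c [primec [chainc cq]]].
  exists (fun i => prime_f (c i)); split; [|split].
  - by move=> i le_in; apply/prime_f_prime/primec.
  - by move=> i lt_in; apply/prime_f_sincl/chainc.
  - exact/prime_f_incl.
have cE i : (i <= n)%N -> c i = prime_f (contraction (c i)).
  by move=> le_in; apply/prime_amalgE/primec.
exists (fun i => contraction (c i)); split; [|split].
- by move=> i le_in; apply/contraction_prime/primec.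
- move=> i lt_in; apply/prime_f_sincl.
  by rewrite -(cE i (ltnW lt_in)) -(cE i.+1 lt_in); apply: chainc.
- by apply/prime_f_incl; rewrite -cE.
Qed.

Lemma same_height_ext_ideal a :
  same_height (fullset A) amalg a (ext_ideal f J a).
Proof.
move=> n; split=> [ht_a _ /prime_amalg_prime_f [q hq ->] | ht_ae q hq aq].
  move=> /(ext_ideal_incl_prime_f _ (prime_ideal hq)) aq.
  exact/(prime_ht_ge_prime_f n hq)/ht_a.
apply/(prime_ht_ge_prime_f n hq)/ht_ae; first exact: prime_f_prime.
exact/(ext_ideal_incl_prime_f _ (prime_ideal hq)).
Qed.

Lemma primes_above_ext_ideal p : is_ideal (fullset A) p ->
  forall Q, is_prime amalg Q -> incl (ext_ideal f J p) Q <-> incl (prime_f p) Q.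
Proof.
move=> hp _ /prime_amalg_prime_f [q hq ->].
by rewrite prime_f_incl ext_ideal_incl_prime_f //; apply: prime_ideal.
Qed.

End Amalgamation.

Theorem lemma4p4 (A B : comPzRingType) (f : {rmorphism A -> B}) (J : subs B)
  (hJ : is_ideal (fullset B) J) (hJnil : incl J (nilradical B))
  (a : subs A) (ha : is_ideal (fullset A) a)
  (p : subs A) (hp : is_prime (fullset A) p) :
  (minimal_prime_over (fullset A) a p <->
     minimal_prime_over (amalg f J) (ext_ideal f J a) (prime_f f J p)) /\
  same_height (fullset A) (amalg f J) a (ext_ideal f J a) /\
  (minimal_prime_over (amalg f J) (ext_ideal f J p) (prime_f f J p) /\
   (forall Q, minimal_prime_over (amalg f J) (ext_ideal f J p) Q ->
              seteq Q (prime_f f J p)) /\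
   same_height (amalg f J) (amalg f J) (ext_ideal f J p) (prime_f f J p)).
Proof.
have above := primes_above_ext_ideal (f := f) hJ hJnil (prime_ideal hp).
have hpf := prime_f_prime f hJ hp.
split; first exact: minimal_prime_over_prime_f.
split; first exact: same_height_ext_ideal.
split; first exact/(minimal_prime_over_same_primes above)/minimal_prime_over_self.
split; last exact: same_height_same_primes.
by move=> Q /(minimal_prime_over_same_primes above Q); apply: minimal_prime_over_prime.
Qed.
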